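(* Let $(M,g)$ be a four-dimensional oriented smooth Lorentzian manifold with Levi-Civita connection $\nabla$. Consider the equation $$iK^\mu(\nabla_\mu\Psi-C_\mu\Psi+\Psi A_\mu)=0\qquad(\ast)$$ for a smooth $\mathrm{Herm}(2)$-valued vector field $K^\mu$ satisfying $K^\mu\tilde K^\nu+K^\nu\tilde K^\mu=2g^{\mu\nu}e$ and $\nabla_\mu\pi_+(K^\mu)=0$, smooth covector fields $A_\mu$ with values in $\mathfrak{u}(2)$ and $C_\mu$ with values in $\mathfrak{su}(2)$, and a smooth function $\Psi:M\to\mathrm{Mat}(2,\mathbb{C})$. Then $(\ast)$ is invariant under each of the following transformations, i.e. if $(\Psi,K^\mu,C_\mu,A_\mu)$ satisfies $(\ast)$ then so does the transformed quadruple $(\acute\Psi,\acute K^\mu,\acute C_\mu,\acute A_\mu)$: (I) for any smooth $V:M\to U(2)$: $\acute\Psi=\Psi V$, $\acute K^\mu=K^\mu$, $\acute C_\mu=C_\mu$, $\acute A_\mu=V^{-1}A_\mu V-V^{-1}\nabla_\mu V$; (II) for any smooth $S:M\to SU(2)$: $\acute\Psi=S^{-1}\Psi S$, $\acute K^\mu=S^{-1}K^\mu S$, $\acute C_\mu=S^{-1}C_\mu S-S^{-1}\nabla_\mu S$, $\acute A_\mu=S^{-1}A_\mu S-S^{-1}\nabla_\mu S$; (III) for any smooth $S:M\to SU(2)$: $\acute\Psi=S^{-1}\Psi$, $\acute K^\mu=S^{-1}K^\mu S$, $\acute C_\mu=S^{-1}C_\mu S-S^{-1}\nabla_\mu S$,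 $\acute A_\mu=A_\mu$.
   Context: Repeated indices are summed; Greek indices are raised/lowered with $g$. $e$ is the $2\times2$ identity matrix; $\mathrm{Herm}(2)$ = Hermitian $2\times2$ matrices; $\mathfrak{u}(2)$ = anti-Hermitian $2\times2$ matrices; $\mathfrak{su}(2)$ = traceless elements of $\mathfrak{u}(2)$; $U(2)$, $SU(2)$ the unitary and special unitary groups. For $A\in\mathrm{Mat}(2,\mathbb{C})$: $\pi_+(A)=\tfrac12(\operatorname{tr}A)e$, $\pi_-(A)=A-\pi_+(A)$, $\tilde A=\pi_+(A)-\pi_-(A)$. The covariant derivative of a matrix-valued tensor field $V=v_a\sigma^a$ (Pauli basis $\sigma^0=e,\sigma^1,\sigma^2,\sigma^3$, complex tensor fields $v_a$) is $(\nabla v_a)\sigma^a$; products are matrix products of components. *)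

From HB Require Import structures.
From mathcomp Require Import all_boot all_order all_algebra.
From mathcomp Require Import all_classical all_reals all_analysis.
From mathcomp Require Import complex.
Set Implicit Arguments. Unset Strict Implicit. Unset Printing Implicit Defensive.
Import Order.TTheory GRing.Theory Num.Theory numFieldNormedType.Exports.
Local Open Scope ring_scope.
Local Open Scope complex_scope.

(* Local-coordinate model: points of the chart domain U are in 'rV[R]_4,
   coordinates x^0..x^3; tensor indices range over 'I_4. *)

Definition dir (R : realType) (m : 'I_4) : 'rV[R]_4 := delta_mx 0 m.

Definition pd (R : realType) (m : 'I_4) (f : 'rV[R]_4 -> R) : 'rV[R]_4 -> R :=
  fun x => 'D_(dir R m) f x.

Fixpoint ipd (R : realType) (s : seq 'I_4) (f : 'rV[R]_4 -> R) : 'rV[R]_4 -> R :=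
  if s is m :: s' then pd m (ipd s' f) else f.

Definition smooth_on (R : realType) (U : set 'rV[R]_4) (f : 'rV[R]_4 -> R) :=
  forall (s : seq 'I_4) (m : 'I_4) (x : 'rV[R]_4), U x -> derivable (ipd s f) x (dir R m).

Definition smooth_rmx (R : realType) (k l : nat) (U : set 'rV[R]_4)
  (F : 'rV[R]_4 -> 'M[R]_(k, l)) :=
  forall i j, smooth_on U (fun x => F x i j).

Definition smooth_cmx (R : realType) (U : set 'rV[R]_4) (F : 'rV[R]_4 -> 'M[R[i]]_2) :=
  forall i j, smooth_on U (fun x => complex.Re (F x i j)) /\ smooth_on U (fun x => complex.Im (F x i j)).

Definition pdM (R : realType) (m : 'I_4) (F : 'rV[R]_4 -> 'M[R[i]]_2) : 'rV[R]_4 -> 'M[R[i]]_2 :=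
  fun x => \matrix_(i, j) ((pd m (fun y => complex.Re (F y i j)) x) +i* (pd m (fun y => complex.Im (F y i j)) x)).

Definition adjM (R : realType) (A : 'M[R[i]]_2) : 'M[R[i]]_2 := map_mx (fun z => z^*) A^T.
Definition Herm2 (R : realType) (A : 'M[R[i]]_2) : Prop := adjM A = A.
Definition u2 (R : realType) (A : 'M[R[i]]_2) : Prop := adjM A = - A.
Definition su2 (R : realType) (A : 'M[R[i]]_2) : Prop := adjM A = - A /\ \tr A = 0.
Definition U2 (R : realType) (A : 'M[R[i]]_2) : Prop := A *m adjM A = 1%:M.
Definition SU2 (R : realType) (A : 'M[R[i]]_2) : Prop := A *m adjM A = 1%:M /\ \det A = 1.

Definition pi_plus (R : realType) (A : 'M[R[i]]_2) : 'M[R[i]]_2 := (\tr A / 2)%:M.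
Definition pi_minus (R : realType) (A : 'M[R[i]]_2) : 'M[R[i]]_2 := A - pi_plus A.
Definition tildeM (R : realType) (A : 'M[R[i]]_2) : 'M[R[i]]_2 := pi_plus A - pi_minus A.

Definition eta_plus (R : realType) : 'M[R]_4 :=
  \matrix_(i, j) (if i == j then (if i == 0 then 1 else -1) else 0).
Definition lorentzian (R : realType) (G : 'M[R]_4) : Prop :=
  G^T = G /\ exists P : 'M[R]_4, P \in unitmx /\
     (P^T *m G *m P = eta_plus R \/ P^T *m G *m P = - eta_plus R).

Definition ginv (R : realType) (g : 'rV[R]_4 -> 'M[R]_4) (x : 'rV[R]_4) : 'M[R]_4 :=
  invmx (g x).

Definition christoffel (R : realType) (g : 'rV[R]_4 -> 'M[R]_4) (l m n : 'I_4)
  (x : 'rV[R]_4) : R :=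
  2^-1 * \sum_(r < 4) ginv g x l r *
     (pd m (fun y => g y r n) x + pd n (fun y => g y r m) x - pd r (fun y => g y m n) x).

Definition divM (R : realType) (g : 'rV[R]_4 -> 'M[R]_4)
  (X : 'I_4 -> 'rV[R]_4 -> 'M[R[i]]_2) (x : 'rV[R]_4) : 'M[R[i]]_2 :=
  \sum_(m < 4) pdM m (X m) x
  + \sum_(m < 4) \sum_(l < 4) ((christoffel g m m l x)%:C *: X l x).

(* the equation  i K^mu (nabla_mu Psi - C_mu Psi + Psi A_mu) = 0  on U
   (Psi is a Mat(2,C)-valued function, so nabla_mu Psi = d_mu Psi) *)
Definition eqn_star (R : realType) (U : set 'rV[R]_4)
  (Psi : 'rV[R]_4 -> 'M[R[i]]_2) (K C A : 'I_4 -> 'rV[R]_4 -> 'M[R[i]]_2) : Prop :=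
  forall x, U x ->
    \sum_(m < 4) ('i *: (K m x *m (pdM m Psi x - C m x *m Psi x + Psi x *m A m x))) = 0.

(* Write D_m Psi = d_m Psi - C_m Psi + Psi A_m.  For U(2)-valued gauge fields G and H,
   the transformation Psi -> G^-1 Psi H, K -> G^-1 K G, C -> G^-1 C G - G^-1 dG,
   A -> H^-1 A H - H^-1 dH makes D covariant, D' Psi' = G^-1 (D Psi) H, because
   d(G^-1) = - G^-1 (dG) G^-1; hence K'^m D'_m Psi' = G^-1 (K^m D_m Psi) H.
   The three transformations are the cases G = 1, G = H = S and H = 1. *)

From mathcomp Require Import all_boot all_algebra.
From mathcomp Require Import all_classical all_reals all_analysis.
From mathcomp Require Import complex ring.
Import GRing.Theory numFieldNormedType.Exports.
Set Implicit Arguments. Unset Strict Implicit.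
Local Open Scope ring_scope.
Local Open Scope complex_scope.

Section ComplexPartialDerivative.
Variables (R : realType) (x : 'rV[R]_4) (m : 'I_4).

Definition is_pdC (f : 'rV[R]_4 -> R[i]) (df : R[i]) :=
  is_derive x (dir R m) (fun y => complex.Re (f y)) (complex.Re df) /\
  is_derive x (dir R m) (fun y => complex.Im (f y)) (complex.Im df).

Lemma is_pdC_cst (c : R[i]) : is_pdC (fun _ => c) 0.
Proof. by split; exact: is_derive_cst. Qed.

Lemma is_pdCD f g df dg : is_pdC f df -> is_pdC g dg ->
  is_pdC (fun y => f y + g y) (df + dg).
Proof.
move=> [fRe fIm] [gRe gIm]; split.
- have -> : (fun y => complex.Re (f y + g y))
            = (fun y => complex.Re (f y)) + (fun y => complex.Re (g y)).
    by apply/funext => y; rewrite fctE; case: (f y) (g y) => ? ? [? ?].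
  by apply: is_derive_eq; clear fRe fIm gRe gIm; case: df dg => ? ? [? ?].
- have -> : (fun y => complex.Im (f y + g y))
            = (fun y => complex.Im (f y)) + (fun y => complex.Im (g y)).
    by apply/funext => y; rewrite fctE; case: (f y) (g y) => ? ? [? ?].
  by apply: is_derive_eq; clear fRe fIm gRe gIm; case: df dg => ? ? [? ?].
Qed.

Lemma is_pdC_sum n (f : 'I_n -> 'rV[R]_4 -> R[i]) (df : 'I_n -> R[i]) :
  (forall k, is_pdC (f k) (df k)) ->
  is_pdC (fun y => \sum_(k < n) f k y) (\sum_(k < n) df k).
Proof.
elim: n f df => [|n IHn] f df fdf.
  under eq_fun do rewrite big_ord0.
  by rewrite big_ord0; exact: is_pdC_cst.
under eq_fun do rewrite big_ord_recr.
by rewrite big_ord_recr; apply: is_pdCD => //; exact: IHn.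
Qed.

Lemma is_pdCM f g df dg : is_pdC f df -> is_pdC g dg ->
  is_pdC (fun y => f y * g y) (df * g x + f x * dg).
Proof.
move=> [fRe fIm] [gRe gIm]; split.
- have -> : (fun y => complex.Re (f y * g y))
            = (fun y => complex.Re (f y)) * (fun y => complex.Re (g y))
              - (fun y => complex.Im (f y)) * (fun y => complex.Im (g y)).
    by apply/funext => y; rewrite !fctE; case: (f y) (g y) => ? ? [? ?].
  apply: is_derive_eq; clear fRe fIm gRe gIm.
  by case: df dg (f x) (g x) => ? ? [? ?] [? ?] [? ?]; rewrite /GRing.scale /=; ring.
- have -> : (fun y => complex.Im (f y * g y))
            = (fun y => complex.Re (f y)) * (fun y => complex.Im (g y))
              + (fun y => complex.Im (f y)) * (fun y => complex.Re (g y)).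
    by apply/funext => y; rewrite !fctE; case: (f y) (g y) => ? ? [? ?].
  apply: is_derive_eq; clear fRe fIm gRe gIm.
  by case: df dg (f x) (g x) => ? ? [? ?] [? ?] [? ?]; rewrite /GRing.scale /=; ring.
Qed.

Lemma is_pdC_conj f df : is_pdC f df -> is_pdC (fun y => (f y)^*) df^*.
Proof.
case: df => a b [fRe fIm]; split.
- have -> : (fun y => complex.Re (f y)^*) = (fun y => complex.Re (f y)).
    by apply/funext => y; case: (f y).
  exact: fRe.
- have -> : (fun y => complex.Im (f y)^*) = - (fun y => complex.Im (f y)).
    by apply/funext => y; rewrite fctE; case: (f y).
  exact: is_deriveN.
Qed.

End ComplexPartialDerivative.

Section MatrixPartialDerivative.
Variables (R : realType) (x : 'rV[R]_4) (m : 'I_4).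

Definition is_pdM k l (F : 'rV[R]_4 -> 'M[R[i]]_(k, l)) (D : 'M[R[i]]_(k, l)) :=
  forall i j, is_pdC x m (fun y => F y i j) (D i j).

Lemma pdM_val (F : 'rV[R]_4 -> 'M[R[i]]_2) D : is_pdM F D -> pdM m F x = D.
Proof.
move=> FD; apply/matrixP => i j; have [FRe FIm] := FD i j.
by rewrite mxE /pd !derive_val; case: (D i j).
Qed.

Lemma is_pdM_cst k l (c : 'M[R[i]]_(k, l)) : is_pdM (fun _ => c) 0.
Proof. by move=> i j; rewrite mxE; exact: is_pdC_cst. Qed.

Lemma is_pdM_mulmx k l n (F : 'rV[R]_4 -> 'M[R[i]]_(k, l))
    (G : 'rV[R]_4 -> 'M[R[i]]_(l, n)) DF DG :
  is_pdM F DF -> is_pdM G DG -> is_pdM (fun y => F y *m G y) (DF *m G x + F x *m DG).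
Proof.
move=> FD GD i j; under eq_fun do rewrite mxE.
have -> : (DF *m G x + F x *m DG) i j = \sum_k0 (DF i k0 * G x k0 j + F x i k0 * DG k0 j).
  by rewrite !mxE -big_split.
by apply: is_pdC_sum => k0; exact: is_pdCM.
Qed.

Lemma is_pdM_adj (F : 'rV[R]_4 -> 'M[R[i]]_2) D :
  is_pdM F D -> is_pdM (fun y => adjM (F y)) (adjM D).
Proof.
move=> FD i j; rewrite /adjM; under eq_fun do rewrite !mxE.
by rewrite !mxE; exact/is_pdC_conj/FD.
Qed.

Lemma near_eq_is_pdM k l (F G : 'rV[R]_4 -> 'M[R[i]]_(k, l)) D :
  (\forall y \near x, F y = G y) -> is_pdM F D -> is_pdM G D.
Proof.
move=> FG FD i j; have [FRe FIm] := FD i j.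
by split; [apply: (near_eq_is_derive _ FRe) | apply: (near_eq_is_derive _ FIm)];
  apply: filterS FG => y ->.
Qed.

End MatrixPartialDerivative.

Definition derivable_cmx (R : realType) (U : set 'rV[R]_4) (F : 'rV[R]_4 -> 'M[R[i]]_2) :=
  forall m x, U x -> is_pdM x m F (pdM m F x).

Lemma smooth_derivable_cmx (R : realType) (U : set 'rV[R]_4) F :
  smooth_cmx U F -> derivable_cmx U F.
Proof.
move=> sF m x Ux i j; have [sRe sIm] := sF i j; rewrite mxE.
by split; apply: derivableP; [exact: sRe [::] m x Ux | exact: sIm [::] m x Ux].
Qed.

Lemma derivable_cmx_cst (R : realType) (U : set 'rV[R]_4) (c : 'M[R[i]]_2) :
  derivable_cmx U (fun _ => c).
Proof. by move=> m x _; rewrite (pdM_val (is_pdM_cst x m c)); exact: is_pdM_cst. Qed.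

Lemma unitary_invmx (R : realType) (S : 'M[R[i]]_2) : U2 S -> invmx S = adjM S.
Proof.
move=> SU; have [Sunit _] := mulmx1_unit SU.
by rewrite -[invmx S]mulmx1 -SU mulmxA mulVmx // mul1mx.
Qed.

Lemma unitary1 (R : realType) : U2 (1%:M : 'M[R[i]]_2).
Proof. by rewrite /U2 /adjM trmx1 (map_mx1 conjc) mul1mx. Qed.

Section UnitaryField.
Variables (R : realType) (U : set 'rV[R]_4) (S : 'rV[R]_4 -> 'M[R[i]]_2).
Hypotheses (oU : open U) (derS : derivable_cmx U S) (SU : forall y, U y -> U2 (S y)).

Lemma pdM_adj_unitary m x : U x ->
  adjM (pdM m S x) = - (adjM (S x) *m pdM m S x *m adjM (S x)).
Proof.
move=> Ux; have nearU : \forall y \near x, U y by exact: open_nbhs_nbhs.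
have dSSadj : S x *m adjM (pdM m S x) = - (pdM m S x *m adjM (S x)).
  apply/eqP; rewrite -addr_eq0 addrC.
  rewrite -(pdM_val (is_pdM_mulmx (derS m Ux) (is_pdM_adj (derS m Ux)))).
  apply/eqP/pdM_val/(near_eq_is_pdM _ (is_pdM_cst x m 1%:M)).
  by apply: filterS nearU => y /SU.
rewrite -[adjM (pdM m S x)]mul1mx -(mulmx1C (SU Ux)) -[LHS]mulmxA dSSadj.
by rewrite mulmxN mulmxA.
Qed.

Lemma is_pdM_invmx_unitary m x : U x ->
  is_pdM x m (fun y => invmx (S y)) (- (invmx (S x) *m pdM m S x *m invmx (S x))).
Proof.
move=> Ux; have -> : - (invmx (S x) *m pdM m S x *m invmx (S x)) = adjM (pdM m S x).
  by rewrite unitary_invmx; [exact/esym/pdM_adj_unitary | exact: SU].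
apply: (near_eq_is_pdM _ (is_pdM_adj (derS m Ux))).
by apply: filterS (open_nbhs_nbhs (conj oU Ux)) => y /SU /unitary_invmx.
Qed.

End UnitaryField.

Section GaugeAlgebra.
Variables (T : comPzRingType) (n : nat) (G Gi H Hi : 'M[T]_n).
Hypotheses (GGi : G *m Gi = 1%:M) (HHi : H *m Hi = 1%:M).

Let GK m (Z : 'M[T]_(m, n)) : Z *m G *m Gi = Z. Proof. by rewrite -mulmxA GGi mulmx1. Qed.
Let HK m (Z : 'M[T]_(m, n)) : Z *m H *m Hi = Z. Proof. by rewrite -mulmxA HHi mulmx1. Qed.

(* The first line is the product rule for d(Gi P H), with d(Gi) = - Gi dG Gi. *)
Lemma gauge_covariant_derivative P dP dG dH C A :
  (- (Gi *m dG *m Gi) *m P + Gi *m dP) *m H + Gi *m P *m dH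
  - (Gi *m C *m G - Gi *m dG) *m (Gi *m P *m H)
  + Gi *m P *m H *m (Hi *m A *m H - Hi *m dH)
  = Gi *m (dP - C *m P + P *m A) *m H.
Proof.
rewrite !(mulmxDl, mulmxBl, mulmxDr, mulmxBr, mulNmx, mulmxN, mulmxA) !GK !HK.
set u := Gi *m dP *m H; set c := Gi *m C *m P *m H.
by rewrite opprB [- _ + u]addrC (addrAC u) [_ - _ + _]addrA subrK (addrAC u) addrA
  (addrAC (u - c)) addrK.
Qed.

Lemma gauge_covariant_sum k (z : T) (K D : 'I_k -> 'M[T]_n) :
  \sum_(m < k) z *: (Gi *m K m *m G *m (Gi *m D m *m H))
  = Gi *m (\sum_(m < k) z *: (K m *m D m)) *m H.
Proof.
rewrite mulmx_sumr mulmx_suml; apply: eq_bigr => m _.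
by rewrite -scalemxAr -scalemxAl !mulmxA GK.
Qed.

End GaugeAlgebra.

Section GaugeTransformation.
Variables (R : realType) (U : set 'rV[R]_4) (Psi G H : 'rV[R]_4 -> 'M[R[i]]_2).
Variables (K C A : 'I_4 -> 'rV[R]_4 -> 'M[R[i]]_2).
Hypotheses (oU : open U) (derPsi : derivable_cmx U Psi).
Hypotheses (derG : derivable_cmx U G) (GU : forall y, U y -> U2 (G y)).
Hypotheses (derH : derivable_cmx U H) (HU : forall y, U y -> U2 (H y)).

Lemma eqn_star_gauge : eqn_star U Psi K C A ->
  eqn_star U (fun y => invmx (G y) *m Psi y *m H y)
    (fun m y => invmx (G y) *m K m y *m G y)
    (fun m y => invmx (G y) *m C m y *m G y - invmx (G y) *m pdM m G y)
    (fun m y => invmx (H y) *m A m y *m H y - invmx (H y) *m pdM m H y).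
Proof.
move=> Psi_eq x Ux.
have GGi : G x *m invmx (G x) = 1%:M by rewrite unitary_invmx; exact: GU.
have HHi : H x *m invmx (H x) = 1%:M by rewrite unitary_invmx; exact: HU.
transitivity (invmx (G x) *m
  (\sum_(m < 4) 'i *: (K m x *m (pdM m Psi x - C m x *m Psi x + Psi x *m A m x))) *m H x);
  last by rewrite Psi_eq // mulmx0 mul0mx.
rewrite -(gauge_covariant_sum _ GGi); apply: eq_bigr => m _.
rewrite -(gauge_covariant_derivative GGi HHi _ _ (pdM m G x) (pdM m H x)).
congr (_ *: (_ *m (_ - _ + _))).
apply: pdM_val; apply: is_pdM_mulmx (derH m Ux); apply: is_pdM_mulmx (derPsi m Ux).
exact: (is_pdM_invmx_unitary oU derG GU).
Qed.

End GaugeTransformation.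

Lemma trivial_gauge (R : realType) (F : 'M[R[i]]_2) : invmx 1%:M *m F *m 1%:M = F.
Proof. by rewrite invmx1 mul1mx mulmx1. Qed.

Lemma trivial_gauge_connection (R : realType) m x (F : 'M[R[i]]_2) :
  invmx 1%:M *m F *m 1%:M - invmx 1%:M *m pdM m (fun _ => 1%:M) x = F.
Proof. by rewrite trivial_gauge (pdM_val (is_pdM_cst x m _)) mulmx0 subr0. Qed.

Theorem theorem4 (R : realType) (U : set 'rV[R]_4) (g : 'rV[R]_4 -> 'M[R]_4)
  (K C A : 'I_4 -> 'rV[R]_4 -> 'M[R[i]]_2) (Psi : 'rV[R]_4 -> 'M[R[i]]_2) :
  open U ->
  (* (M,g): smooth Lorentzian metric *)
  smooth_rmx U g ->
  (forall x, U x -> lorentzian (g x)) ->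
  (* K^mu: smooth Herm(2)-valued vector field *)
  (forall m, smooth_cmx U (K m)) ->
  (forall m x, U x -> Herm2 (K m x)) ->
  (forall m n x, U x ->
     K m x *m tildeM (K n x) + K n x *m tildeM (K m x) = ((2 * ginv g x m n)%:C)%:M) ->
  (forall x, U x -> divM g (fun m y => pi_plus (K m y)) x = 0) ->
  (* C_mu: smooth su(2)-valued covector field; A_mu: smooth u(2)-valued *)
  (forall m, smooth_cmx U (C m)) ->
  (forall m x, U x -> su2 (C m x)) ->
  (forall m, smooth_cmx U (A m)) ->
  (forall m x, U x -> u2 (A m x)) ->
  (* Psi: smooth Mat(2,C)-valued function *)
  smooth_cmx U Psi ->
  (* (I) *)
  (forall V : 'rV[R]_4 -> 'M[R[i]]_2,
     smooth_cmx U V -> (forall x, U x -> U2 (V x)) ->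
     eqn_star U Psi K C A ->
     eqn_star U (fun x => Psi x *m V x) K C
       (fun m x => invmx (V x) *m A m x *m V x - invmx (V x) *m pdM m V x))
  /\
  (* (II) *)
  (forall S : 'rV[R]_4 -> 'M[R[i]]_2,
     smooth_cmx U S -> (forall x, U x -> SU2 (S x)) ->
     eqn_star U Psi K C A ->
     eqn_star U (fun x => invmx (S x) *m Psi x *m S x)
       (fun m x => invmx (S x) *m K m x *m S x)
       (fun m x => invmx (S x) *m C m x *m S x - invmx (S x) *m pdM m S x)
       (fun m x => invmx (S x) *m A m x *m S x - invmx (S x) *m pdM m S x))
  /\
  (* (III) *)
  (forall S : 'rV[R]_4 -> 'M[R[i]]_2,
     smooth_cmx U S -> (forall x, U x -> SU2 (S x)) ->
     eqn_star U Psi K C A ->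
     eqn_star U (fun x => invmx (S x) *m Psi x)
       (fun m x => invmx (S x) *m K m x *m S x)
       (fun m x => invmx (S x) *m C m x *m S x - invmx (S x) *m pdM m S x)
       A).
Proof.
move=> oU _ _ _ _ _ _ _ _ _ _ /smooth_derivable_cmx derPsi.
have der1 : derivable_cmx U (fun _ => 1%:M : 'M[R[i]]_2) by exact: derivable_cmx_cst.
have U2_1 (y : 'rV[R]_4) : U y -> U2 (1%:M : 'M[R[i]]_2) by move=> _; exact: unitary1.
split; [|split] => S /smooth_derivable_cmx derS SU.
- have {2}-> : K = fun m y => invmx 1%:M *m K m y *m 1%:M.
    by do 2 apply/funext => ?; rewrite trivial_gauge.
  have {2}-> : C = fun m y =>
      invmx 1%:M *m C m y *m 1%:M - invmx 1%:M *m pdM m (fun _ => 1%:M) y.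
    by do 2 apply/funext => ?; rewrite trivial_gauge_connection.
  have -> : (fun y => Psi y *m S y) = fun y => invmx 1%:M *m Psi y *m S y.
    by apply/funext => ?; rewrite invmx1 mul1mx.
  exact: (eqn_star_gauge (G := fun _ => 1%:M) oU derPsi der1 U2_1 derS SU).
- have SU' y (Uy : U y) : U2 (S y) := (SU y Uy).1.
  exact: (eqn_star_gauge oU derPsi derS SU' derS SU').
- have SU' y (Uy : U y) : U2 (S y) := (SU y Uy).1.
  have {2}-> : A = fun m y =>
      invmx 1%:M *m A m y *m 1%:M - invmx 1%:M *m pdM m (fun _ => 1%:M) y.
    by do 2 apply/funext => ?; rewrite trivial_gauge_connection.
  have -> : (fun y => invmx (S y) *m Psi y) = fun y => invmx (S y) *m Psi y *m 1%:M.
    by apply/funext => ?; rewrite mulmx1.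
  exact: (eqn_star_gauge (H := fun _ => 1%:M) oU derPsi derS SU' der1 U2_1).
Qed.
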